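(* For any finite set $\mathcal{I}$ of closed intervals on the real line and any $k \in \mathbb{N}$, there exists a balanced $k$-coloring of $\mathcal{I}$.
   Context: Let $\mathcal{I}=\{I_1,\dots,I_n\}$ be a finite set of closed intervals $[\ell,r]\subset\mathbb{R}$ and $K=\{1,\dots,k\}$. A $k$-coloring is a map $\chi:\mathcal{I}\to K$. For $x\in\mathbb{R}$ and $i\in K$, let $c_i(x)$ be the number of intervals of $\mathcal{I}$ that contain $x$ and have color $i$. The imbalance at $x$ is $\mathrm{imb}(x)=\max_{i,j\in K}|c_i(x)-c_j(x)|$, and the imbalance of $\chi$ is $\mathrm{imb}(\chi)=\max_{x\in\mathbb{R}}\mathrm{imb}(x)$. A $k$-coloring is called balanced if its imbalance is at most one. *)

From mathcomp Require Import all_boot all_order all_algebra.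
From mathcomp Require Import reals.
Set Implicit Arguments. Unset Strict Implicit. Unset Printing Implicit Defensive.
Import Order.TTheory GRing.Theory Num.Theory.
Local Open Scope ring_scope.

(* A finite family of closed intervals [l j, r j], j : 'I_n, on R.
   A k-coloring is chi : 'I_n -> 'I_k (colors {0,..,k-1} stand for {1,..,k}). *)

Definition color_count (R : realType) (n k : nat) (l r : 'I_n -> R)
  (chi : 'I_n -> 'I_k) (i : 'I_k) (x : R) : nat :=
  #|[set j : 'I_n | (l j <= x <= r j) && (chi j == i)]|.

Definition imb_at (R : realType) (n k : nat) (l r : 'I_n -> R)
  (chi : 'I_n -> 'I_k) (x : R) : nat :=
  (\max_(i < k) \max_(j < k)
     `|(color_count l r chi i x)%:Z - (color_count l r chi j x)%:Z|)%N.

Definition balanced (R : realType) (n k : nat) (l r : 'I_n -> R)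
  (chi : 'I_n -> 'I_k) : Prop :=
  forall x : R, (imb_at l r chi x <= 1)%N.

(* With two colors, sort the intervals by left endpoint and let I and J be the
   first two, I ending no later than J.  Coloring them oppositely makes their
   signed contributions cancel wherever both are present, so together they act
   like the single interval "J to the right of I" with J's color; induction on
   the number of intervals gives a signed count in {-1, 0, 1} everywhere.

   For k colors, take a coloring minimizing the sum over all sets S of
   intervals through a common point of the squared color counts in S.  If two
   colors i, j were unbalanced somewhere, recoloring the intervals of colors i
   and j by a balanced two-coloring keeps every sum c_i + c_j and every other
   count, so by convexity of squares no term grows and the unbalanced one
   shrinks. *)

From mathcomp Require Import all_boot all_order all_algebra.
From mathcomp Require Import reals interval zify boolp.
Import Order.TTheory GRing.Theory Num.Theory.

Set Implicit Arguments.
Unset Strict Implicit.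
Unset Printing Implicit Defensive.

Local Open Scope ring_scope.

Section TwoColoring.
Context {disp : Order.disp_t} {X : orderType disp} {L : eqType}.

Definition lbound (I : interval X) : itv_bound X := let: Interval a _ := I in a.
Definition rbound (I : interval X) : itv_bound X := let: Interval _ b := I in b.

Definition sgn (b : bool) : int := if b then 1 else -1.

Definition discrepancy (s : seq (L * interval X)) (c : L -> bool) (x : X) : int :=
  \sum_(p <- s | x \in p.2) sgn (c p.1).

Lemma in_itv_bounds (I : interval X) x :
  (x \in I) = (lbound I <= BLeft x)%O && (BRight x <= rbound I)%O.
Proof. by case: I. Qed.

Lemma perm_discrepancy s1 s2 c x :
  perm_eq s1 s2 -> discrepancy s1 c x = discrepancy s2 c x.
Proof. exact: perm_big. Qed.

Lemma eq_discrepancy s c c' x :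
  {in map fst s, c =1 c'} -> discrepancy s c x = discrepancy s c' x.
Proof.
move=> ecc'; rewrite /discrepancy big_seq_cond [RHS]big_seq_cond.
by apply: eq_bigr => p /andP[ps _]; rewrite ecc' // map_f.
Qed.

Lemma norm_discrepancy_le s c x :
  `|discrepancy s c x| <= (count (fun p => x \in p.2) s)%:R.
Proof.
elim: s => [|p s IHs]; first by rewrite /discrepancy big_nil.
rewrite /discrepancy big_cons /=; case: (x \in p.2) => /=; last by rewrite add0n.
rewrite natrD (le_trans (ler_normD _ _)) // lerD //.
by case: (c p.1).
Qed.

(* Used as a left bound, [rbound I] excludes exactly the points of [I], so
   [Interval (rbound I) (rbound J)] is the part of [J] to the right of [I]. *)
Lemma discrepancy_merge a b I J s c x :
  (rbound I <= rbound J)%O -> c a = ~~ c b ->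
  (lbound I <= BLeft x)%O -> (lbound J <= BLeft x)%O ->
  discrepancy [:: (a, I), (b, J) & s] c x =
  discrepancy ((b, Interval (rbound I) (rbound J)) :: s) c x.
Proof.
move=> leIJ cab xI xJ; rewrite /discrepancy !big_cons /= !in_itv_bounds /= xI xJ.
rewrite -ltBRight_leBLeft ltNge cab /=.
case: leP => [xIr | _] //; rewrite (le_trans xIr leIJ).
by rewrite addrA; case: (c b); rewrite /= ?addNr ?subrr ?add0r.
Qed.

Lemma two_coloring_step a b I J s (M : itv_bound X) :
  (rbound I <= rbound J)%O -> (lbound I <= M)%O -> (lbound J <= M)%O ->
  (M == lbound I) || (M == lbound J) -> {in s, forall p, M <= lbound p.2}%O ->
  a != b -> a \notin map fst s ->
  (exists c, forall x,
     `|discrepancy ((b, Interval (rbound I) (rbound J)) :: s) c x| <= 1) ->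
  exists c, forall x, `|discrepancy [:: (a, I), (b, J) & s] c x| <= 1.
Proof.
move=> leIJ IM JM hM Ms ab a_s [c0 hc0].
exists (fun t => if t == a then ~~ c0 b else c0 t) => x.
case: (leP M (BLeft x)) => [Mx | xM].
  rewrite discrepancy_merge ?eqxx 1?eq_sym ?(negbTE ab) ?(le_trans _ Mx) //.
  rewrite (@eq_discrepancy _ _ c0) // => t; rewrite inE => /orP[/eqP-> | ts].
    by rewrite eq_sym (negbTE ab).
  by case: eqP ts => // ->; rewrite (negbTE a_s).
rewrite (le_trans (norm_discrepancy_le _ _ _)) // lern1 /= !in_itv_bounds /=.
have -> : count (fun p => x \in p.2) s = 0%N.
  apply/eqP; rewrite -leqn0 leqNgt -has_count; apply/hasPn => p ps.
  by rewrite in_itv_bounds negb_and -ltNge (lt_le_trans xM) ?Ms.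
by case/orP: hM => /eqP <-; rewrite (lt_geF xM) /= ?addn0 ?add0n; apply: leq_b1.
Qed.

Lemma two_coloring (s : seq (L * interval X)) :
  uniq (map fst s) -> exists c, forall x, `|discrepancy s c x| <= 1.
Proof.
have [m] := ubnP (size s); elim: m s => // m IHm s lt_sm us.
have [le_s1 | lt1s] := leqP (size s) 1.
  exists xpredT => x; rewrite (le_trans (norm_discrepancy_le _ _ _)) //.
  by rewrite lern1 (leq_trans (count_size _ _)).
pose leL (p q : L * interval X) := (lbound p.2 <= lbound q.2)%O.
have perm_sorted : perm_eq (sort leL s) s by rewrite perm_sort.
suff [c hc] : exists c, forall x, `|discrepancy (sort leL s) c x| <= 1.
  by exists c => x; rewrite -(perm_discrepancy _ _ perm_sorted).
have := sort_sorted (fun p q => le_total (lbound p.2) (lbound q.2)) s.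
have := size_sort leL s; rewrite -(perm_uniq (perm_map fst perm_sorted)) in us.
move: us; case: (sort leL s) => [|[a I] [|[b J] t]] //= ust; try lia.
move=> size_t /andP[leIJ sorted_t].
have Jt : {in t, forall p, lbound J <= lbound p.2}%O.
  by apply/allP; apply: order_path_min sorted_t => ? ? ?; apply: le_trans.
have IHt d K : d \notin map fst t ->
    exists c, forall x, `|discrepancy ((d, K) :: t) c x| <= 1.
  by move=> d_t; apply: IHm; rewrite /= ?d_t; [rewrite -ltnS size_t | case/and3P: ust].
case/and3P: ust; rewrite inE negb_or => /andP[ab a_t] b_t _.
have [leIJr | ltJIr] := leP (rbound I) (rbound J).
  by apply: (two_coloring_step (M := lbound J)); rewrite ?eqxx ?orbT //; apply: IHt.
have [c hc] : exists c, forall x, `|discrepancy [:: (b, J), (a, I) & t] c x| <= 1.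
  apply: (two_coloring_step (M := lbound J)) => //; last exact: IHt.
  - exact: ltW.
  - by rewrite eqxx.
  - by rewrite eq_sym.
have swapIJ : perm_eq [:: (a, I), (b, J) & t] [:: (b, J), (a, I) & t].
  by rewrite (perm_catCA [:: _] [:: _]).
by exists c => x; rewrite (perm_discrepancy _ _ swapIJ).
Qed.

End TwoColoring.

Lemma sq_rebalance (a b a' b' : nat) :
  (a' + b' = a + b)%N -> (`|a'%:Z - b'%:Z| <= 1)%N ->
  (a' ^ 2 + b' ^ 2 <= a ^ 2 + b ^ 2)%N /\
  ((1 < `|a%:Z - b%:Z|)%N -> (a' ^ 2 + b' ^ 2 < a ^ 2 + b ^ 2)%N).
Proof.
move=> sum_ab gap_ab.
have factor : (a ^ 2 + b ^ 2)%:Z - (a' ^ 2 + b' ^ 2)%:Z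
              = 2 * (a%:Z - a'%:Z) * (a%:Z - b'%:Z) by nia.
(* [a'] and [b'] are adjacent integers, so [a] cannot lie strictly between them. *)
have : (a <= a' /\ a <= b' \/ a' <= a /\ b' <= a)%N by lia.
by split; nia.
Qed.

Section Rebalancing.
Variables (D : finType) (k : nat).

Definition class (f : D -> 'I_k) (i : 'I_k) : {set D} := [set t | f t == i].

Definition gap (f : D -> 'I_k) (S : {set D}) (i j : 'I_k) : nat :=
  `|#|S :&: class f i|%:Z - #|S :&: class f j|%:Z|%N.

Definition recolors (f f' : D -> 'I_k) (i j : 'I_k) : Prop :=
  (forall t, f t != i -> f t != j -> f' t = f t) /\
  (forall t, (f t == i) || (f t == j) -> (f' t == i) || (f' t == j)).

Lemma gapii f S i : gap f S i i = 0%N.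
Proof. by rewrite /gap subrr. Qed.

Lemma card_classI_other f f' i j u S : recolors f f' i j -> u != i -> u != j ->
  #|S :&: class f' u| = #|S :&: class f u|.
Proof.
move=> [keep stay] ui uj; apply: eq_card => t; rewrite !inE.
have neq_u v : (v == i) || (v == j) -> (v == u) = false.
  by case/orP=> /eqP->; apply/negbTE; rewrite eq_sym.
have [fij | ] := boolP ((f t == i) || (f t == j)); first by rewrite !neq_u ?stay.
by rewrite negb_or => /andP[fi fj]; rewrite keep.
Qed.

Lemma card_classI_pair f S i j : i != j ->
  (#|S :&: class f i| + #|S :&: class f j|)%N = #|S :&: (class f i :|: class f j)|.
Proof.
move=> ij; rewrite -cardsUI -setIUr.
suff -> : S :&: class f i :&: (S :&: class f j) = set0 by rewrite cards0 addn0.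
apply/setP => t; rewrite !inE andbACA.
by have [->|nfi] := eqVneq (f t) i; rewrite ?(negbTE ij) ?(negbTE nfi) !andbF.
Qed.

Lemma card_classI_recoloring f f' i j S : i != j -> recolors f f' i j ->
  (#|S :&: class f' i| + #|S :&: class f' j|)%N =
  (#|S :&: class f i| + #|S :&: class f j|)%N.
Proof.
move=> ij [keep stay]; rewrite !card_classI_pair //; congr #|S :&: _|.
apply/setP => t; rewrite !inE.
have [fij | ] := boolP ((f t == i) || (f t == j)); first exact: stay.
by rewrite negb_or => /andP[fi fj]; rewrite keep // (negbTE fi) (negbTE fj).
Qed.

Lemma sum_sq_recoloring f f' i j S : i != j -> recolors f f' i j ->
  (gap f' S i j <= 1)%N ->
  (\sum_u #|S :&: class f' u| ^ 2 <= \sum_u #|S :&: class f u| ^ 2 /\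
   (1 < gap f S i j ->
    \sum_u #|S :&: class f' u| ^ 2 < \sum_u #|S :&: class f u| ^ 2))%N.
Proof.
move=> ij recf gap_f'.
have split_ij (g : D -> 'I_k) : (\sum_u #|S :&: class g u| ^ 2 =
    #|S :&: class g i| ^ 2 + #|S :&: class g j| ^ 2 +
    \sum_(u | (u != i) && (u != j)) #|S :&: class g u| ^ 2)%N.
  by rewrite (bigD1 i) // (bigD1 j) 1?eq_sym //= addnA.
rewrite !split_ij.
have -> : (\sum_(u | (u != i) && (u != j)) #|S :&: class f' u| ^ 2 =
           \sum_(u | (u != i) && (u != j)) #|S :&: class f u| ^ 2)%N.
  by apply: eq_bigr => u /andP[ui uj]; rewrite (card_classI_other _ recf).
have [le_ij lt_ij] := sq_rebalance (card_classI_recoloring S ij recf) gap_f'.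
by split=> [|/lt_ij]; [rewrite leq_add2r | rewrite ltn_add2r].
Qed.

Variable cells : {set {set D}}.

Definition potential (f : D -> 'I_k) : nat :=
  (\sum_(S in cells) \sum_u #|S :&: class f u| ^ 2)%N.

Lemma potential_recoloring f f' i j S0 : i != j -> recolors f f' i j ->
  {in cells, forall S, gap f' S i j <= 1}%N ->
  S0 \in cells -> (1 < gap f S0 i j)%N -> (potential f' < potential f)%N.
Proof.
move=> ij recf gap_f' S0cells gapS0.
rewrite /potential (bigD1 S0) // [X in (_ < X)%N](bigD1 S0) //= -addSn.
have step S (Scells : S \in cells) := sum_sq_recoloring ij recf (gap_f' S Scells).
rewrite leq_add ?(step S0 S0cells).2 //.
by apply: leq_sum => S /andP[/step[]].
Qed.

Lemma exists_balanced_coloring (f0 : D -> 'I_k) :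
  (forall f i j, i != j ->
     exists2 f', recolors f f' i j & {in cells, forall S, gap f' S i j <= 1}%N) ->
  exists f, {in cells, forall S i j, gap f S i j <= 1}%N.
Proof.
move=> rebalance.
have [m] := ubnP (potential f0); elim: m f0 => // m IHm f lt_fm.
have [bal | ] := boolP [forall S in cells, forall i, forall j, gap f S i j <= 1]%N.
  by exists f => S Scells i j; move/forall_inP/(_ S Scells)/forallP/(_ i)/forallP: bal.
case/forall_inPn => S Scells /forallPn[i /forallPn[j]]; rewrite -ltnNge => gapS.
have ij : i != j by apply: contraTneq gapS => ->; rewrite gapii.
have [f' recf gap_f'] := rebalance f i j ij.
apply: (IHm f'); rewrite -ltnS (leq_trans _ lt_fm) // ltnS.
exact: potential_recoloring recf gap_f' Scells gapS.
Qed.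

End Rebalancing.

Lemma sum_sgn (T : finType) (P : pred T) (c : T -> bool) :
  \sum_(t | P t) sgn (c t) =
  #|[pred t | P t && c t]|%:Z - #|[pred t | P t && ~~ c t]|%:Z.
Proof.
rewrite (bigID c) /=.
rewrite (eq_bigr (fun=> 1)) => [|t /andP[_ ->]] //.
rewrite [X in _ + X](eq_bigr (fun=> -1)) => [|t /andP[_ /negbTE ->]] //.
by rewrite !sumr_const mulNrn !natz.
Qed.

Section Intervals.
Variables (R : realType) (n k : nat) (l r : 'I_n -> R).

Definition active (x : R) : {set 'I_n} := [set t | l t <= x <= r t].

Lemma color_count_class (chi : 'I_n -> 'I_k) i x :
  color_count l r chi i x = #|active x :&: class chi i|.
Proof. by apply: eq_card => t; rewrite !inE. Qed.

Lemma imb_at_le1_gap (chi : 'I_n -> 'I_k) x :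
  (forall i j, gap chi (active x) i j <= 1)%N -> (imb_at l r chi x <= 1)%N.
Proof.
move=> bal; apply/bigmax_leqP => i _; apply/bigmax_leqP => j _.
by rewrite !color_count_class bal.
Qed.

Lemma interval_recoloring (f : 'I_n -> 'I_k) i j : i != j ->
  exists2 f', recolors f f' i j & forall x, (gap f' (active x) i j <= 1)%N.
Proof.
move=> ij; pose P := class f i :|: class f j.
pose s := [seq (t, `[l t, r t]) | t <- enum P].
have [c bal_c] : exists c, forall x, `|discrepancy s c x| <= 1.
  by apply: two_coloring; rewrite -map_comp map_id enum_uniq.
pose f' t := if t \in P then (if c t then i else j) else f t.
have class_f' t :
    (f' t == i) = (t \in P) && c t /\ (f' t == j) = (t \in P) && ~~ c t.
  rewrite /f'; have [tP | ] := boolP (t \in P).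
    by case: (c t); rewrite /= eqxx ?(negbTE ij) // eq_sym (negbTE ij).
  by rewrite !inE negb_or => /andP[/negbTE-> /negbTE->].
exists f'.
  split=> t; first by move=> fi fj; rewrite /f' ifF // !inE (negbTE fi) (negbTE fj).
  by move=> fij; have [-> ->] := class_f' t; rewrite !inE fij; case: (c t).
move=> x; have := bal_c x.
suff -> : discrepancy s c x =
          #|active x :&: class f' i|%:Z - #|active x :&: class f' j|%:Z.
  by rewrite /gap -lez_nat abszE.
rewrite /discrepancy big_map big_enum_cond /= sum_sgn.
congr (_%:Z - _%:Z); apply: eq_card => t; have [f'i f'j] := class_f' t;
  by rewrite [LHS]inE /= in_itv !inE ?f'i ?f'j !inE -andbA andbCA.
Qed.

End Intervals.

Theorem theorem1 (R : realType) (n k : nat) (l r : 'I_n -> R)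
  (hlr : forall j, l j <= r j)
  (hdist : forall j1 j2, l j1 = l j2 -> r j1 = r j2 -> j1 = j2)
  (hk : (0 < k)%N) :
  exists chi : 'I_n -> 'I_k, balanced l r chi.
Proof.
pose cells := [set S : {set 'I_n} | `[< exists x, S = active l r x >]].
have [chi bal] :
    exists chi : 'I_n -> 'I_k, {in cells, forall S i j, gap chi S i j <= 1}%N.
  apply: (exists_balanced_coloring (fun _ => Ordinal hk)) => f i j ij.
  have [f' recf bal_f'] := interval_recoloring l r f ij.
  by exists f' => // S; rewrite inE => /asboolP[x ->].
exists chi => x; apply: imb_at_le1_gap => i j; apply: bal.
by rewrite inE; apply/asboolP; exists x.
Qed.
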